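(* Let $(L_i)_{i\in\mathbb Z}$ be integers with $L_i\ge1$ and $|L_i-L_{i+1}|\le1$ for all $i$. Let $(x_i)_{i\in\mathbb Z}$ be real numbers. For each $i$, define $y_i(k)$ for $0\le k\le L_i$ by $y_i(0)=\frac{1}{2L_i+1}x_i$; $y_i(1)=y_i(0)+y_{i-1}(0)+y_{i+1}(0)$; $y_i(2)=y_i(1)+(y_{i-1}(1)-y_{i-1}(0))+(y_{i+1}(1)-y_{i+1}(0))-2y_i(0)$ (if $L_i\ge2$); and for $2\le k\le L_i-1$, $y_i(k+1)=y_i(k)+(y_{i-1}(k)-y_{i-1}(k-1))+(y_{i+1}(k)-y_{i+1}(k-1))-(y_i(k-1)-y_i(k-2))$. Then all quantities used in these updates are defined, and for every $i$, $$y_i(L_i)=\frac{1}{2L_i+1}x_i+\sum_{j=1}^{L_i}\Big(\frac{1}{2L_{i-j}+1}x_{i-j}+\frac{1}{2L_{i+j}+1}x_{i+j}\Big).$$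
   Context: Sensors indexed by $i\in\mathbb Z$ on a line, each with time-invariant measurement $x_i$, individual window parameter $L_i$, and consensus variable $y_i(k)$; communication only with immediate neighbors $i\pm1$. *)

From Stdlib Require Import Reals Lra Lia ZArith.
Open Scope R_scope.

Definition wmeas (L : Z -> nat) (x : Z -> R) (i : Z) : R :=
  x i / (2 * INR (L i) + 1).

(* y : Z -> nat -> R satisfies the update rules of the protocol, on the
   domain 0 <= k <= L_i of each sensor i (values outside are irrelevant). *)
Definition satisfies_updates (L : Z -> nat) (x : Z -> R) (y : Z -> nat -> R) : Prop :=
  (forall i, y i 0%nat = wmeas L x i) /\
  (forall i, (1 <= L i)%nat ->
     y i 1%nat = y i 0%nat + y (i - 1)%Z 0%nat + y (i + 1)%Z 0%nat) /\
  (forall i, (2 <= L i)%nat ->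
     y i 2%nat = y i 1%nat + (y (i - 1)%Z 1%nat - y (i - 1)%Z 0%nat)
                 + (y (i + 1)%Z 1%nat - y (i + 1)%Z 0%nat) - 2 * y i 0%nat) /\
  (forall i (k : nat), (2 <= k)%nat -> (k <= L i - 1)%nat ->
     y i (S k) = y i k + (y (i - 1)%Z k - y (i - 1)%Z (k - 1)%nat)
                 + (y (i + 1)%Z k - y (i + 1)%Z (k - 1)%nat)
                 - (y i (k - 1)%nat - y i (k - 2)%nat)).

From Stdlib Require Import Reals ZArith Lra Lia.
Open Scope R_scope.

(* Write w_i = x_i / (2 L_i + 1) and let
     W_i(k) = w_i + sum_{j=1}^{k} (w_{i-j} + w_{i+j})
   be the window sum of radius k around sensor i.  Then
   (1) W satisfies every update rule of the protocol, for all i and k: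
       the rules are telescoping identities between window sums of
       neighbouring sensors (e.g. W_{i-1}(k) - W_{i-1}(k-1) adds the two
       terms at distance k of sensor i-1);
   (2) since |L_i - L_{i+1}| <= 1, computing y_i(k+1) with k+1 <= L_i only
       reads neighbour values at times <= k <= L_{i+-1}, so the rules
       determine y_i(k) for all k <= L_i: two solutions agree there, by
       strong induction on k.
   Hence any solution y has y_i(L_i) = W_i(L_i), the claimed windowed sum,
   and W itself witnesses that the recursion can be carried out. *)

Fixpoint window_sum (L : Z -> nat) (x : Z -> R) (i : Z) (k : nat) : R :=
  match k with
  | O => wmeas L x i
  | S k' => window_sum L x i k'
            + wmeas L x (i - Z.of_nat (S k'))%Z + wmeas L x (i + Z.of_nat (S k'))%Z
  end.

Lemma wmeas_index L x (a b : Z) : a = b -> wmeas L x a = wmeas L x b.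
Proof. now intros ->. Qed.

Lemma window_sum_satisfies_updates L x : satisfies_updates L x (window_sum L x).
Proof.
  split; [|split; [|split]].
  - reflexivity.
  - intros i _; simpl; lra.
  - intros i _; simpl.
    rewrite (wmeas_index L x (i - 1 - 1) (i - 2)) by lia.
    rewrite (wmeas_index L x (i + 1 + 1) (i + 2)) by lia.
    rewrite (wmeas_index L x (i - 1 + 1) i) by lia.
    rewrite (wmeas_index L x (i + 1 - 1) i) by lia.
    lra.
  - intros i k Hk _.
    destruct k as [|[|m]]; [lia|lia|].
    replace (S (S m) - 1)%nat with (S m) by lia.
    replace (S (S m) - 2)%nat with m by lia.
    cbn [window_sum].
    rewrite (wmeas_index L x (i - Z.of_nat (S (S (S m)))) (i - 1 - Z.of_nat (S (S m)))) by lia.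
    rewrite (wmeas_index L x (i + Z.of_nat (S (S (S m)))) (i + 1 + Z.of_nat (S (S m)))) by lia.
    rewrite (wmeas_index L x (i - 1 + Z.of_nat (S (S m))) (i + Z.of_nat (S m))) by lia.
    rewrite (wmeas_index L x (i + 1 - Z.of_nat (S (S m))) (i - Z.of_nat (S m))) by lia.
    lra.
Qed.

Lemma window_sum_sum_f L x i m :
  window_sum L x i (S m) = wmeas L x i +
    sum_f 1 (S m) (fun j => wmeas L x (i - Z.of_nat j)%Z + wmeas L x (i + Z.of_nat j)%Z).
Proof.
  unfold sum_f; replace (S m - 1)%nat with m by lia.
  induction m as [|m IH].
  - simpl; lra.
  - cbn [window_sum sum_f_R0] in *. rewrite IH, Nat.add_1_r. lra.
Qed.

Lemma neighbour_domain (L : Z -> nat)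
  (HL2 : forall i : Z, (Z.abs (Z.of_nat (L i) - Z.of_nat (L (i + 1)%Z)) <= 1)%Z)
  (i : Z) (k : nat) :
  (S k <= L i)%nat -> (k <= L (i - 1)%Z)%nat /\ (k <= L (i + 1)%Z)%nat.
Proof.
  intros Hk. pose proof (HL2 i) as Hright. pose proof (HL2 (i - 1)%Z) as Hleft.
  replace (i - 1 + 1)%Z with i in Hleft by lia. split; lia.
Qed.

Lemma updates_unique_on_domain (L : Z -> nat) (x : Z -> R) (y z : Z -> nat -> R)
  (Hdom : forall (i : Z) (k : nat), (S k <= L i)%nat ->
     (k <= L (i - 1)%Z)%nat /\ (k <= L (i + 1)%Z)%nat) :
  satisfies_updates L x y -> satisfies_updates L x z ->
  forall (i : Z) (k : nat), (k <= L i)%nat -> y i k = z i k.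
Proof.
  intros [Hy0 [Hy1 [Hy2 Hy3]]] [Hz0 [Hz1 [Hz2 Hz3]]].
  enough (Hstrong : forall n i k, (k <= n)%nat -> (k <= L i)%nat -> y i k = z i k)
    by (intros i k Hk; exact (Hstrong k i k (le_n k) Hk)).
  induction n as [|n IH]; intros i k Hkn Hki.
  { replace k with 0%nat by lia. now rewrite Hy0, Hz0. }
  destruct (Nat.le_gt_cases k n) as [Hk|Hk]; [now apply IH|].
  replace k with (S n) in Hki by lia. replace k with (S n) by lia. clear Hk Hkn.
  (* every value read by the update of y_i(n+1) is within the domain *)
  destruct (Hdom i n Hki) as [Hleft Hright].
  assert (agree : forall j k', (k' <= n)%nat -> j = (i - 1)%Z \/ j = i \/ j = (i + 1)%Z ->
                    y j k' = z j k').
  { intros j k' Hk' [-> | [-> | ->]]; apply IH; lia. }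
  destruct n as [|[|m]].
  - rewrite Hy1, Hz1 by lia. now rewrite !Hy0, !Hz0.
  - rewrite Hy2, Hz2 by lia.
    rewrite (agree i 1%nat), (agree (i - 1)%Z 1%nat), (agree (i + 1)%Z 1%nat) by lia.
    now rewrite !Hy0, !Hz0.
  - rewrite Hy3, Hz3 by lia.
    rewrite (agree i (S (S m))), (agree i (S (S m) - 1)%nat), (agree i (S (S m) - 2)%nat),
      (agree (i - 1)%Z (S (S m))), (agree (i - 1)%Z (S (S m) - 1)%nat),
      (agree (i + 1)%Z (S (S m))), (agree (i + 1)%Z (S (S m) - 1)%nat) by lia.
    reflexivity.
Qed.

Theorem mainTheorem4 (L : Z -> nat) (x : Z -> R)
  (HL1 : forall i : Z, (1 <= L i)%nat)
  (HL2 : forall i : Z, (Z.abs (Z.of_nat (L i) - Z.of_nat (L (i + 1)%Z)) <= 1)%Z) :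
  (* all quantities used are defined: computing y_i(k+1) (k+1 <= L_i) only
     uses y_{i-1}, y_{i+1} at times <= k, which are within their domains *)
  (forall (i : Z) (k : nat), (S k <= L i)%nat ->
     (k <= L (i - 1)%Z)%nat /\ (k <= L (i + 1)%Z)%nat) /\
  (* the recursion can be carried out *)
  (exists y : Z -> nat -> R, satisfies_updates L x y) /\
  (* and its outcome is the windowed sum *)
  (forall y : Z -> nat -> R, satisfies_updates L x y ->
     forall i : Z,
       y i (L i) = wmeas L x i +
         sum_f 1 (L i) (fun j => wmeas L x (i - Z.of_nat j)%Z
                                 + wmeas L x (i + Z.of_nat j)%Z)).
Proof.
  pose proof (neighbour_domain L HL2) as Hdom.
  split; [exact Hdom|].
  split; [exists (window_sum L x); apply window_sum_satisfies_updates|].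
  intros y Hy i.
  rewrite (updates_unique_on_domain L x y (window_sum L x) Hdom Hy
             (window_sum_satisfies_updates L x) i (L i) (le_n _)).
  pose proof (HL1 i) as Hpos.
  destruct (L i) as [|m]; [lia|].
  apply window_sum_sum_f.
Qed.
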